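(* Let $(X,\tau)$ be a topological space and $A\subseteq X$. Then $A$ is statistically compact in $(X,\tau)$ if and only if $A$ is statistically compact in $(X,\tau_{ST})$.
   Context: For $A\subseteq\mathbb{N}$ let $d_n(A)=|A\cap\{1,\dots,n\}|/n$, $\overline{d}(A)=\limsup_n d_n(A)$, $\underline{d}(A)=\liminf_n d_n(A)$, and $d(A)$ their common value when equal. A sequence in $X$ is a map from an infinite subset $M\subseteq\mathbb{N}$ into $X$, written $(x_n)_{n\in M}$; a subsequence is $(x_n)_{n\in N}$ with $N\subseteq M$ infinite. It is nonthin if $\overline{d}(M)>0$. A nonthin sequence $(x_n)_{n\in M}$ is statistically convergent to $a\in X$ if for every open $U\ni a$, $d(\{n\in M:x_n\notin U\})=0$. The statistical closure $\overline{F}^{ST}$ of $F\subseteq X$ is the set of $x\in X$ such that some nonthin sequence in $F$ is statistically convergent to $x$; $F$ is statistically closed if $\overline{F}^{ST}=F$. $\tau_{ST}=\{F\subseteq X: X\setminus F$ is statistically closed in $(X,\tau)\}$; this is a topology on $X$ containing $\tau$. A topological space is statistically compact if every nonthin sequence in it has a nonthin subsequence that is statistically convergent to some point of the space; a subset is statistically compact if it is so in the subspace topology. *)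

From Stdlib Require Import Reals ClassicalEpsilon.
From Coquelicot Require Import Coquelicot.
Open Scope R_scope.

Definition is_topology {T : Type} (O : (T -> Prop) -> Prop) : Prop :=
  O (fun _ => True) /\ O (fun _ => False) /\
  (forall U V, O U -> O V -> O (fun x => U x /\ V x)) /\
  (forall (I : Type) (F : I -> T -> Prop), (forall i, O (F i)) ->
     O (fun x => exists i, F i x)).

Fixpoint cnt (A : nat -> Prop) (n : nat) : nat :=
  match n with
  | O => O
  | S m => (cnt A m + (if excluded_middle_informative (A (S m)) then 1 else 0))%nat
  end.

Definition dens (A : nat -> Prop) (n : nat) : R := INR (cnt A n) / INR n.

Definition density_zero (A : nat -> Prop) : Prop := is_lim_seq (dens A) 0.

Definition index_set (M : nat -> Prop) : Prop :=
  (forall n, M n -> (0 < n)%nat) /\ (forall N, exists n, (N <= n)%nat /\ M n).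

(* A sequence (x_n)_{n in M} is represented by M and x : nat -> T
   (only the values on M matter).  Nonthin: upper density of M is > 0. *)
Definition nonthin (M : nat -> Prop) : Prop :=
  index_set M /\ Rbar_lt 0 (LimSup_seq (dens M)).

Definition stat_conv {T : Type} (O : (T -> Prop) -> Prop)
  (M : nat -> Prop) (x : nat -> T) (a : T) : Prop :=
  nonthin M /\
  forall U, O U -> U a -> density_zero (fun n => M n /\ ~ U (x n)).

Definition stat_closure {T : Type} (O : (T -> Prop) -> Prop)
  (F : T -> Prop) (a : T) : Prop :=
  exists (M : nat -> Prop) (x : nat -> T),
    nonthin M /\ (forall n, M n -> F (x n)) /\ stat_conv O M x a.

Definition stat_closed {T : Type} (O : (T -> Prop) -> Prop) (F : T -> Prop) : Prop :=
  forall a, stat_closure O F a <-> F a.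

Definition tau_ST {T : Type} (O : (T -> Prop) -> Prop) : (T -> Prop) -> Prop :=
  fun G => stat_closed O (fun x => ~ G x).

Definition stat_compact {T : Type} (O : (T -> Prop) -> Prop) : Prop :=
  forall (M : nat -> Prop) (x : nat -> T), nonthin M ->
    exists N : nat -> Prop, (forall n, N n -> M n) /\ nonthin N /\
      exists a : T, stat_conv O N x a.

Definition subspace {T : Type} (O : (T -> Prop) -> Prop) (A : T -> Prop)
  : ({y : T | A y} -> Prop) -> Prop :=
  fun V => exists U, O U /\ forall y : {y : T | A y}, V y <-> U (proj1_sig y).

Definition stat_compact_subset {T : Type} (O : (T -> Prop) -> Prop) (A : T -> Prop) : Prop :=
  stat_compact (subspace O A).

(* The whole argument rests on one fact: a nonthin sequence converges
   statistically to a in (X, tau) iff it does so in (X, tau_ST).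
   - tau is contained in tau_ST, so tau_ST-convergence implies tau-convergence.
   - Conversely, if x tau-converges statistically to a and U is tau_ST-open with
     U a, the exceptional set K = {n in M | x n not in U} must have density zero:
     otherwise K is nonthin, the subsequence (x_n)_{n in K} lies in the
     statistically closed complement of U and still tau-converges to a, forcing
     a out of U.
   Statistical convergence in a subspace is statistical convergence of the
   underlying sequence in the ambient space, and statistical compactness is
   defined purely in terms of statistical convergence; so two topologies with
   the same statistical convergence have the same statistically compact subsets. *)

From Stdlib Require Import Reals Lra Lia Classical ClassicalEpsilon.
From Coquelicot Require Import Coquelicot.
Open Scope R_scope.

Lemma cnt_mono (A B : nat -> Prop) :
  (forall n, A n -> B n) -> forall n, (cnt A n <= cnt B n)%nat.
Proof.
  intros AB n; induction n as [|n IH]; simpl; [lia|].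
  destruct (excluded_middle_informative (A (S n))) as [a|a];
  destruct (excluded_middle_informative (B (S n))) as [b|b]; try lia.
  exfalso; apply b, AB, a.
Qed.

Lemma cnt_le_n (A : nat -> Prop) (n : nat) : (cnt A n <= n)%nat.
Proof.
  induction n as [|n IH]; simpl; [lia|].
  destruct (excluded_middle_informative (A (S n))); lia.
Qed.

Lemma cnt_bounded (K : nat -> Prop) (N0 : nat) :
  (forall n, K n -> (n <= N0)%nat) -> forall n, (cnt K n <= N0)%nat.
Proof.
  intros HK n; induction n as [|n IH]; simpl; [lia|].
  destruct (excluded_middle_informative (K (S n))) as [k|k]; [|lia].
  pose proof (HK _ k); pose proof (cnt_le_n K n); lia.
Qed.

Lemma dens_nonneg (A : nat -> Prop) (n : nat) : 0 <= dens A n.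
Proof.
  unfold dens; destruct n as [|n].
  - simpl; unfold Rdiv; rewrite Rinv_0; lra.
  - apply Rdiv_le_0_compat; [apply pos_INR | apply lt_0_INR; lia].
Qed.

Lemma dens_mono (A B : nat -> Prop) :
  (forall n, A n -> B n) -> forall n, dens A n <= dens B n.
Proof.
  intros AB n; unfold dens; destruct n as [|n]; [simpl; lra|].
  apply Rmult_le_compat_r; [left; apply Rinv_0_lt_compat, lt_0_INR; lia|].
  apply le_INR, cnt_mono, AB.
Qed.

Lemma density_zero_sub (A B : nat -> Prop) :
  (forall n, A n -> B n) -> density_zero B -> density_zero A.
Proof.
  intros AB HB; unfold density_zero.
  apply (is_lim_seq_le_le (fun _ => 0) _ (dens B));
    [| apply is_lim_seq_const | exact HB].
  intros n; split; [apply dens_nonneg | apply dens_mono, AB].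
Qed.

(* Bounded (in particular empty) sets have density zero: d_n <= N0 / n. *)
Lemma density_zero_bounded (K : nat -> Prop) (N0 : nat) :
  (forall n, K n -> (n <= N0)%nat) -> density_zero K.
Proof.
  intros HK; unfold density_zero.
  apply (is_lim_seq_le_le (fun _ => 0) _ (fun n => INR N0 * / INR n));
    [| apply is_lim_seq_const |].
  - intros n; split; [apply dens_nonneg|].
    unfold dens, Rdiv; destruct n as [|n]; [simpl; rewrite Rinv_0; lra|].
    apply Rmult_le_compat_r; [left; apply Rinv_0_lt_compat, lt_0_INR; lia|].
    apply le_INR, cnt_bounded, HK.
  - replace (Finite 0) with (Rbar_mult (INR N0) (Rbar_inv p_infty))
      by (simpl; f_equal; ring).
    apply is_lim_seq_scal_l, is_lim_seq_inv; [apply is_lim_seq_INR | discriminate].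
Qed.

Lemma is_lim_seq_0_of_LimSup (u : nat -> R) :
  (forall n, 0 <= u n) -> Rbar_le (LimSup_seq u) 0 -> is_lim_seq u 0.
Proof.
  intros Hpos Hsup.
  assert (Hinf : Rbar_le 0 (LimInf_seq u)).
  { rewrite <- (LimInf_seq_const 0); apply LimInf_le; exists O; intros; apply Hpos. }
  assert (E : LimSup_seq u = 0 /\ LimInf_seq u = 0).
  { pose proof (LimSup_LimInf_seq_le u).
    destruct (LimSup_seq u) as [s| |]; destruct (LimInf_seq u) as [i| |];
      simpl in *; try tauto; split; f_equal; lra. }
  destruct E as [Esup Einf].
  assert (Hsl : LimSup_seq u = LimInf_seq u) by (rewrite Esup, Einf; reflexivity).
  destruct (proj2 (ex_lim_LimSup_LimInf_seq u) Hsl) as [l Hl].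
  pose proof (is_LimSup_seq_unique _ _ (is_lim_LimSup_seq _ _ Hl)) as El.
  rewrite Esup in El; subst l; exact Hl.
Qed.

Lemma nonthin_not_density_zero (M : nat -> Prop) : nonthin M -> ~ density_zero M.
Proof.
  intros [_ Hsup] Hzero.
  apply is_lim_LimSup_seq, is_LimSup_seq_unique in Hzero.
  rewrite Hzero in Hsup; simpl in Hsup; lra.
Qed.

Lemma not_density_zero_nonthin (K : nat -> Prop) :
  (forall n, K n -> (0 < n)%nat) -> ~ density_zero K -> nonthin K.
Proof.
  intros Hpos Hnz; split; [split; [exact Hpos|] |].
  - intros N0; apply NNPP; intros Hfin; apply Hnz.
    apply (density_zero_bounded K N0); intros n Kn.
    destruct (Compare_dec.le_lt_dec n N0) as [le|lt]; [exact le|].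
    exfalso; apply Hfin; exists n; split; [lia | exact Kn].
  - destruct (Rbar_le_lt_dec (LimSup_seq (dens K)) 0) as [le|lt]; [|exact lt].
    exfalso; apply Hnz, is_lim_seq_0_of_LimSup; [apply dens_nonneg | exact le].
Qed.

(* The full index set {1, 2, ...} is nonthin (it has density 1). *)
Lemma nonthin_positive : nonthin (fun k => (0 < k)%nat).
Proof.
  assert (Hcnt : forall n, cnt (fun k => (0 < k)%nat) n = n).
  { induction n as [|n IH]; simpl; [reflexivity|].
    destruct (excluded_middle_informative (0 < S n)%nat); lia. }
  split; [split; [auto | intros N0; exists (S N0); split; lia] |].
  assert (Hlim : is_lim_seq (dens (fun k => (0 < k)%nat)) 1).
  { apply (is_lim_seq_ext_loc (fun _ => 1)); [| apply is_lim_seq_const].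
    exists 1%nat; intros n Hn; unfold dens; rewrite Hcnt.
    field; apply not_0_INR; lia. }
  apply is_lim_LimSup_seq, is_LimSup_seq_unique in Hlim.
  rewrite Hlim; simpl; lra.
Qed.

(* tau is coarser than tau_ST: the complement of an open set U is statistically
   closed, since a nonthin sequence outside U cannot converge into U, and each
   point outside U is the limit of a constant sequence. *)
Lemma open_tau_ST {T : Type} (O : (T -> Prop) -> Prop) (U : T -> Prop) :
  O U -> tau_ST O U.
Proof.
  intros HU b; split.
  - intros [M [y [HM [Hout [_ Hconv]]]]] Ub.
    apply (nonthin_not_density_zero M HM).
    apply (density_zero_sub M (fun n => M n /\ ~ U (y n)));
      [intros n Mn; split; auto | apply Hconv; auto].
  - intros nUb; exists (fun k => (0 < k)%nat), (fun _ => b).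
    split; [apply nonthin_positive|]; split; [auto|].
    split; [apply nonthin_positive|].
    intros V _ Vb; apply (density_zero_bounded _ 0); intros n [_ nVb]; contradiction.
Qed.

Lemma stat_conv_tau_ST {T : Type} (O : (T -> Prop) -> Prop)
  (N : nat -> Prop) (x : nat -> T) (a : T) :
  stat_conv O N x a <-> stat_conv (tau_ST O) N x a.
Proof.
  split; intros [HN Hconv]; split; try exact HN; intros U HU Ua.
  - apply NNPP; intros Hnz.
    set (K := fun n => N n /\ ~ U (x n)).
    assert (HK : nonthin K).
    { apply not_density_zero_nonthin; [| exact Hnz].
      intros n [Nn _]; destruct HN as [[Hpos _] _]; auto. }
    (* (x_n)_{n in K} lies outside U and still converges to a in O. *)
    assert (HKconv : stat_conv O K x a).
    { split; [exact HK|]; intros V HV Va.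
      apply (density_zero_sub _ (fun n => N n /\ ~ V (x n)));
        [intros n [[Nn _] nV]; auto | auto]. }
    apply (proj1 (HU a)); [| exact Ua].
    exists K, x; split; [exact HK|]; split; [intros n [_ nU]; exact nU | exact HKconv].
  - apply Hconv; [apply open_tau_ST|]; assumption.
Qed.

Lemma stat_conv_subspace {T : Type} (O : (T -> Prop) -> Prop) (A : T -> Prop)
  (N : nat -> Prop) (x : nat -> {y : T | A y}) (a : {y : T | A y}) :
  stat_conv (subspace O A) N x a <->
  stat_conv O N (fun n => proj1_sig (x n)) (proj1_sig a).
Proof.
  split; intros [HN Hconv]; split; try exact HN.
  - intros U HU Ua; apply (Hconv (fun y => U (proj1_sig y))); [| exact Ua].
    exists U; split; [exact HU | tauto].
  - intros V [U [HU HV]] Va.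
    apply (density_zero_sub _ (fun n => N n /\ ~ U (proj1_sig (x n))));
      [intros n [Nn nV]; split; [exact Nn | intros u; apply nV, HV, u] |].
    apply Hconv; [exact HU | apply HV, Va].
Qed.

Lemma stat_conv_subspace_equiv {T : Type} (O O' : (T -> Prop) -> Prop)
  (A : T -> Prop) :
  (forall N (x : nat -> T) a, stat_conv O N x a <-> stat_conv O' N x a) ->
  forall N (x : nat -> {y : T | A y}) a,
    stat_conv (subspace O A) N x a <-> stat_conv (subspace O' A) N x a.
Proof.
  intros Heq N x a.
  rewrite (stat_conv_subspace O), (stat_conv_subspace O'); apply Heq.
Qed.

Lemma stat_compact_equiv {T : Type} (O O' : (T -> Prop) -> Prop) :
  (forall N (x : nat -> T) a, stat_conv O N x a <-> stat_conv O' N x a) ->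
  stat_compact O <-> stat_compact O'.
Proof.
  intros Heq; split; intros Hcomp M x HM;
    destruct (Hcomp M x HM) as [N [NM [HN [a Ha]]]];
    exists N; (split; [exact NM|]); (split; [exact HN|]); exists a; apply Heq, Ha.
Qed.

Theorem mainTheorem15 (X : Type) (tau : (X -> Prop) -> Prop)
  (Htau : is_topology tau) (A : X -> Prop) :
  stat_compact_subset tau A <-> stat_compact_subset (tau_ST tau) A.
Proof.
  apply stat_compact_equiv, stat_conv_subspace_equiv, stat_conv_tau_ST.
Qed.
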